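(* Let $A$ be a finite-dimensional Hilbert space and let $\{\Theta_\rho\}_{\rho\in\mathfrak{S}(A)}$ be a family of linear maps $\Theta_\rho:\mathfrak{B}(A)\to\mathfrak{B}(A)$ such that: $\Theta_\rho$ depends linearly on $\rho$; $\Theta_\rho(M)=\rho M$ whenever $M\in\mathfrak{B}(A)$ satisfies $[\rho,M]=0$; and each $\Theta_\rho$ is self-adjoint with respect to the Hilbert–Schmidt inner product $\langle X,Y\rangle=\mathrm{Tr}[X^\dagger Y]$. Then there is a real number $\mu$ such that $$\Theta_\rho(M)=\mu\,\rho M+(1-\mu)\,M\rho\quad\text{for all }\rho\in\mathfrak{S}(A),\ M\in\mathfrak{B}(A).$$ If moreover each $\Theta_\rho$ is positive semidefinite with respect to the Hilbert–Schmidt inner product (i.e. $\mathrm{Tr}[M^\dagger\Theta_\rho(M)]\ge0$ for all $M$), then $0\le\mu\le1$.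
   Context: $\mathfrak{B}(A)$ denotes the linear operators on $A$ and $\mathfrak{S}(A)$ the density operators on $A$; $[X,Y]=XY-YX$. Linear dependence on $\rho$ means $\rho\mapsto\Theta_\rho$ is (the restriction of) a linear map from $\mathfrak{B}(A)$ into the linear maps on $\mathfrak{B}(A)$. *)

From HB Require Import structures.
From mathcomp Require Import all_boot all_order all_algebra.
Set Implicit Arguments. Unset Strict Implicit. Unset Printing Implicit Defensive.
Import Order.TTheory GRing.Theory Num.Theory.
Local Open Scope ring_scope.

(* Scalars: C : numClosedFieldType (the complex numbers are an instance).
   The finite-dimensional Hilbert space A is C^n; B(A) = 'M[C]_n. *)

Definition hadj (C : numClosedFieldType) (n : nat) (X : 'M[C]_n) : 'M[C]_n :=
  (map_mx Num.conj X)^T.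

Definition hs_inner (C : numClosedFieldType) (n : nat) (X Y : 'M[C]_n) : C :=
  \tr (hadj X *m Y).

Definition psd_op (C : numClosedFieldType) (n : nat) (X : 'M[C]_n) : Prop :=
  hadj X = X /\ forall v : 'cV[C]_n, 0 <= ((map_mx Num.conj v)^T *m X *m v) 0 0.

Definition density (C : numClosedFieldType) (n : nat) (rho : 'M[C]_n) : Prop :=
  psd_op rho /\ \tr rho = 1.

(* Theta and the maps (rho, M) |-> mu rho M + (1 - mu) M rho are bilinear and density
   operators span B(A), so the hypotheses extend from densities to all of B(A).  The
   commutation hypothesis applied to rho + sigma shows that the symmetric part of Theta is
   the Jordan product, so the defect D(X, Y) = Theta_X Y - mu X Y - (1 - mu) Y X is
   antisymmetric, and for real mu self-adjointness makes (W, X, Y) |-> Tr (W D(X, Y))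
   totally antisymmetric.  If w is orthogonal to x and y, the projector w w^dagger commutes
   with x y^dagger, so D(w w^dagger, x y^dagger) = 0; taking w = e_a + s e_b and comparing
   coefficients of the polynomial in s and conj s kills every value of the trilinear form on
   matrix units except those on the cycles (E_da, E_aa, E_ad), which all equal one constant.
   The choice mu = Theta(E_00, E_01)_01 makes that constant zero, hence D = 0.  Positivity
   tested at M = E_01 and M = E_10 gives mu >= 0 and 1 - mu >= 0. *)

From HB Require Import structures.
From mathcomp Require Import all_boot all_order all_algebra.
From mathcomp Require Import ring.
Set Implicit Arguments. Unset Strict Implicit. Unset Printing Implicit Defensive.
Import Order.TTheory GRing.Theory Num.Theory.
Local Open Scope ring_scope.

Section Adjoint.
Variable C : numClosedFieldType.

Definition adjmx m p (A : 'M[C]_(m, p)) : 'M[C]_(p, m) := (map_mx Num.conj A)^T.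

Lemma adjmxE m p (A : 'M[C]_(m, p)) i j : adjmx A i j = (A j i)^*.
Proof. by rewrite !mxE. Qed.

Lemma adjmxK m p (A : 'M[C]_(m, p)) : adjmx (adjmx A) = A.
Proof. by apply/matrixP=> i j; rewrite !adjmxE conjCK. Qed.

Lemma adjmxM m p q (A : 'M[C]_(m, p)) (B : 'M[C]_(p, q)) :
  adjmx (A *m B) = adjmx B *m adjmx A.
Proof. by rewrite /adjmx map_mxM trmx_mul. Qed.

Lemma adjmxD m p (A B : 'M[C]_(m, p)) : adjmx (A + B) = adjmx A + adjmx B.
Proof. by rewrite /adjmx map_mxD linearD. Qed.

Lemma adjmxZ m p a (A : 'M[C]_(m, p)) : adjmx (a *: A) = a^* *: adjmx A.
Proof. by apply/matrixP=> i j; rewrite !(adjmxE, mxE) rmorphM. Qed.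

Lemma adjmx0 m p : adjmx (0 : 'M[C]_(m, p)) = 0.
Proof. by apply/matrixP=> i j; rewrite !mxE conjC0. Qed.

Lemma adjmx_delta m p (i : 'I_m) (j : 'I_p) : adjmx (delta_mx i j) = delta_mx j i.
Proof. by apply/matrixP=> k l; rewrite adjmxE !mxE rmorph_nat andbC. Qed.

Lemma mxtrace_adjmx n (A : 'M[C]_n) : \tr (adjmx A) = (\tr A)^*.
Proof. by rewrite mxtrace_tr /mxtrace rmorph_sum; apply: eq_bigr => i _; rewrite mxE. Qed.

Lemma mxtrace_delta_mul n (i j : 'I_n) (A : 'M[C]_n) : \tr (delta_mx i j *m A) = A j i.
Proof.
rewrite /mxtrace (bigD1 i) //= big1 ?addr0 => [|k /negbTE ki].
  rewrite mxE (bigD1 j) //= big1 ?addr0 => [|k /negbTE kj]; rewrite mxE.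
    by rewrite !eqxx mul1r.
  by rewrite kj andbF mul0r.
by rewrite mxE big1 // => l _; rewrite mxE ki mul0r.
Qed.

Lemma mxtrace_delta n (i j : 'I_n) : \tr (delta_mx i j : 'M[C]_n) = (i == j)%:R.
Proof. by rewrite -[delta_mx i j]mulmx1 mxtrace_delta_mul mxE eq_sym. Qed.

Variable n : nat.
Implicit Types X Y Z : 'M[C]_n.

Lemma hadjE X : hadj X = adjmx X. Proof. by []. Qed.

Lemma hadjK X : hadj (hadj X) = X.
Proof. exact: adjmxK. Qed.

Lemma hs_innerDr X Y Z : hs_inner X (Y + Z) = hs_inner X Y + hs_inner X Z.
Proof. by rewrite /hs_inner mulmxDr mxtraceD. Qed.

Lemma hs_innerZr X a Y : hs_inner X (a *: Y) = a * hs_inner X Y.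
Proof. by rewrite /hs_inner -scalemxAr mxtraceZ. Qed.

Lemma hs_innerDl X Y Z : hs_inner (X + Y) Z = hs_inner X Z + hs_inner Y Z.
Proof. by rewrite /hs_inner hadjE adjmxD mulmxDl mxtraceD. Qed.

Lemma hs_innerZl X a Y : hs_inner (a *: X) Y = a^* * hs_inner X Y.
Proof. by rewrite /hs_inner hadjE adjmxZ -scalemxAl mxtraceZ. Qed.

Lemma hs_innerNr X Y : hs_inner X (- Y) = - hs_inner X Y.
Proof. by rewrite -scaleN1r hs_innerZr mulN1r. Qed.

Lemma hs_innerNl X Y : hs_inner (- X) Y = - hs_inner X Y.
Proof. by rewrite -scaleN1r hs_innerZl rmorphN1 mulN1r. Qed.

Lemma hs_innerC X Y : hs_inner X Y = (hs_inner Y X)^*.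
Proof. by rewrite /hs_inner -mxtrace_adjmx !hadjE adjmxM adjmxK. Qed.

Lemma hs_inner_delta (i j : 'I_n) X : hs_inner (delta_mx i j) X = X i j.
Proof. by rewrite /hs_inner hadjE adjmx_delta mxtrace_delta_mul. Qed.

End Adjoint.

Section Polarization.
Variables (C : numClosedFieldType) (V : lmodType C).

Lemma conjC_linear_eq0 (x y : V) :
  (forall s : C, s^* *: x + s *: y = 0) -> x = 0 /\ y = 0.
Proof.
move=> h; have y_x : y = - x.
  by apply/esym/addr0_eq; have := h 1; rewrite conjC1 !scale1r.
suff x0 : x = 0 by rewrite y_x x0 oppr0.
have /eqP := h 'i; rewrite y_x scalerN -scalerBl conjCi scaler_eq0 -opprD oppr_eq0.
by rewrite -mulr2n mulrn_eq0 /= (negbTE (neq0Ci C)) => /eqP.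
Qed.

Lemma conjC_quadratic_eq0 (a b c d : V) :
  (forall s : C, s^* *: a + s^* ^+ 2 *: b + (s * s^*) *: c + s *: d = 0) ->
  [/\ a = 0, b = 0, c = 0 & d = 0].
Proof.
move=> h.
have {}h s : (s^* *: a + s *: d) + s^* *: (s^* *: b + s *: c) = 0.
  by rewrite scalerDr !scalerA [s^* * s]mulrC -(h s) addrAC -!addrA.
have odd s : s^* *: a + s *: d = 0.
  have e2 : - (s^* *: a + s *: d) + s^* *: (s^* *: b + s *: c) = 0.
    by rewrite -(h (- s)) !(rmorphN, scaleNr, scalerN, opprD, opprK, scalerDr, scalerA, mulrN).
  move: (h s) e2; set u := _ + s *: d; set w := _ *: (_ + _) => e1 e2.
  have : (u + w) - (- u + w) = u *+ 2.
    by rewrite opprD opprK addrACA subrr addr0 mulr2n.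
  by rewrite e1 e2 subrr -scaler_nat => /esym/eqP; rewrite scaler_eq0 pnatr_eq0 => /eqP.
have [a0 d0] := conjC_linear_eq0 odd.
have even s : s^* *: b + s *: c = 0.
  have [->|s0] := eqVneq s 0; first by rewrite conjC0 !scale0r addr0.
  by apply/eqP; have /eqP := h s; rewrite odd add0r scaler_eq0 conjC_eq0 (negbTE s0).
by have [b0 c0] := conjC_linear_eq0 even.
Qed.
End Polarization.

Section RankOne.
Variables (C : numClosedFieldType) (n : nat).
Implicit Types (u v : 'cV[C]_n) (R S X : 'M[C]_n).

Local Notation ev i := (delta_mx i 0 : 'cV[C]_n).

Definition dyad v : 'M[C]_n := v *m adjmx v.

Lemma mul_ev_adjmx (i j : 'I_n) : ev i *m adjmx (ev j) = delta_mx i j.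
Proof. by rewrite adjmx_delta mul_delta_mx. Qed.

Lemma adjmx_ev_mul (i j : 'I_n) : adjmx (ev i) *m ev j = delta_mx 0 0 *+ (i == j).
Proof. by rewrite adjmx_delta mul_delta_mx_cond. Qed.

Lemma adjmx_ev_mul0 (i j : 'I_n) : i != j -> adjmx (ev i) *m ev j = 0.
Proof. by move=> /negbTE ij; rewrite adjmx_ev_mul ij. Qed.

Lemma dyad_ev (i : 'I_n) : dyad (ev i) = delta_mx i i.
Proof. exact: mul_ev_adjmx. Qed.

Lemma dyadDZ u v (s : C) : dyad (u + s *: v) =
  dyad u + s^* *: (u *m adjmx v) + s *: (v *m adjmx u) + (s * s^*) *: dyad v.
Proof.
rewrite /dyad adjmxD adjmxZ mulmxDl !mulmxDr -!scalemxAl -!scalemxAr scalerA.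
by rewrite !addrA.
Qed.

Lemma adjmx_dyad v : hadj (dyad v) = dyad v.
Proof. by rewrite hadjE adjmxM adjmxK. Qed.

Lemma psd_dyad v : psd_op (dyad v).
Proof.
split=> [|x]; first exact: adjmx_dyad.
rewrite /dyad !mulmxA -mulmxA -[adjmx v *m x]adjmxK adjmxM adjmxK.
by rewrite mxE big_ord1 adjmxE mul_conjC_ge0.
Qed.

Lemma psdD R S : psd_op R -> psd_op S -> psd_op (R + S).
Proof.
move=> [hR qR] [hS qS]; split=> [|x]; first by rewrite !hadjE adjmxD -!hadjE hR hS.
by rewrite mulmxDr mulmxDl mxE addr_ge0.
Qed.

Lemma mxtrace_dyad_gt0 v : v != 0 -> 0 < \tr (dyad v).
Proof.
move=> v0; have [i vi0] : exists i, v i 0 != 0.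
  apply/existsP; apply: contraR v0 => /existsPn v0.
  by apply/eqP/matrixP => i j; rewrite ord1 mxE; apply/eqP/negbNE/v0.
have tr_sum : \tr (dyad v) = \sum_i v i 0 * (v i 0)^*.
  by apply: eq_bigr => k _; rewrite mxE big_ord1 adjmxE.
rewrite tr_sum lt0r psumr_eq0 => [|k _]; last exact: mul_conjC_ge0.
rewrite sumr_ge0 => [|k _]; last exact: mul_conjC_ge0.
by rewrite andbT; apply/allPn; exists i; rewrite ?mem_index_enum // mul_conjC_eq0.
Qed.

Lemma density_normalize R : psd_op R -> 0 < \tr R -> density ((\tr R)^-1 *: R).
Proof.
move=> [hR qR] trR; have c_ge0 : 0 <= (\tr R)^-1 by rewrite invr_ge0 ltW.
split; [split=> [|x] | by rewrite mxtraceZ mulVf ?gt_eqF].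
- by rewrite hadjE adjmxZ -hadjE hR conj_Creal ?ger0_real.
- by rewrite -scalemxAr -scalemxAl mxE mulr_ge0.
Qed.

Lemma density_delta (i : 'I_n) : density (delta_mx i i : 'M[C]_n).
Proof.
have tr1 : \tr (delta_mx i i : 'M[C]_n) = 1 by rewrite mxtrace_delta eqxx.
have := density_normalize (psd_dyad (ev i)).
by rewrite dyad_ev tr1 invr1 scale1r ltr01 => /(_ isT).
Qed.

Lemma density_span_ind (P : 'M[C]_n -> Prop) :
  P 0 -> (forall a X Y, P X -> P Y -> P (a *: X + Y)) ->
  (forall rho, density rho -> P rho) -> forall X, P X.
Proof.
move=> P0 Plin Pdens.
have PZ a X : P X -> P (a *: X) by move=> PX; rewrite -[_ *: _]addr0; apply: Plin.
have PD X Y : P X -> P Y -> P (X + Y) by move=> PX PY; rewrite -[X]scale1r; apply: Plin.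
have Pdyad v : P (dyad v).
  have [->|v0] := eqVneq v 0; first by rewrite /dyad mul0mx.
  have trv := mxtrace_dyad_gt0 v0.
  rewrite -[dyad v]scale1r -(divff (lt0r_neq0 trv)) -scalerA.
  exact/PZ/Pdens/density_normalize/trv/psd_dyad.
have Pdelta i j : P (delta_mx i j).
  have -> : delta_mx i j = 2^-1 *: dyad (ev i + ev j) + ('i / 2 *: dyad (ev i + 'i *: ev j)
      + (- (1 + 'i) / 2 *: dyad (ev i) + (- (1 + 'i) / 2 *: dyad (ev j) + 0))) :> 'M[C]_n.
    rewrite -{1}[ev j]scale1r !dyadDZ !mul_ev_adjmx !dyad_ev conjC1 conjCi.
    apply/matrixP => k l; rewrite !mxE.
    have two0 : (2 : C) != 0 by rewrite pnatr_eq0.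
    by field: (sqrCi C).
  by do 4!(apply: (Plin); first exact: Pdyad).
move=> X; rewrite [X]matrix_sum_delta.
elim/big_rec: _ => [|i Y _ PY]; first exact: P0.
apply: (PD _ _ _ PY); elim/big_rec: _ => [|j Z _ PZij]; first exact: P0.
by apply: (PD _ _ _ PZij); apply/PZ/Pdelta.
Qed.
End RankOne.

Section Extension.
Variables (C : numClosedFieldType) (n : nat) (Theta : 'M[C]_n -> 'M[C]_n -> 'M[C]_n).
Hypothesis Theta_linl : forall M : 'M[C]_n, linear (Theta ^~ M).
Hypothesis Theta_linr_density : forall rho, density rho -> linear (Theta rho).
Hypothesis Theta_comm_density : forall rho, density rho ->
  forall M, rho *m M - M *m rho = 0 -> Theta rho M = rho *m M.
Hypothesis Theta_selfadj_density : forall rho, density rho ->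
  forall X Y, hs_inner X (Theta rho Y) = hs_inner (Theta rho X) Y.
Implicit Types (R M X Y Z : 'M[C]_n).

Local Notation ev i := (delta_mx i 0 : 'cV[C]_n).
Local Notation E i j := (delta_mx i j : 'M[C]_n).

Lemma Theta0l M : Theta 0 M = 0.
Proof.
apply: (@addrI _ (Theta 0 M)); rewrite addr0.
by have := Theta_linl M 1 0 0; rewrite !scale1r addr0 => <-.
Qed.

Lemma Theta_linr R : linear (Theta R).
Proof.
elim/density_span_ind: R => [a M1 M2 | b X Y linX linY a M1 M2 | //].
  by rewrite !Theta0l scaler0 addr0.
rewrite !Theta_linl linX linY scalerDr addrACA !scalerA mulrC -!scalerA -scalerDr.
by rewrite -Theta_linl.
Qed.

Lemma Theta_bilinear : bilinear_for *:%R *:%R Theta.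
Proof. by split; [exact: Theta_linl | exact: Theta_linr]. Qed.

HB.instance Definition _ := bilinear_isBilinear.Build C _ _ _ *:%R *:%R Theta Theta_bilinear.

Lemma Theta_psd_comm R M :
  psd_op R -> 0 < \tr R -> R *m M = M *m R -> Theta R M = R *m M.
Proof.
move=> psdR trR RM; have tr0 := lt0r_neq0 trR.
rewrite -[R]scale1r -(divff tr0) -scalerA linearZl /= Theta_comm_density.
- by rewrite -!scalemxAl.
- exact: density_normalize.
- by rewrite -scalemxAl -scalemxAr RM subrr.
Qed.

Lemma Theta_adj X Y Z : hs_inner Z (Theta X Y) = hs_inner (Theta (hadj X) Z) Y.
Proof.
elim/density_span_ind: X Y Z => [|a X1 X2 IH1 IH2 | rho drho] Y Z.
- by rewrite /hs_inner !hadjE !(adjmx0, linear0l) mulmx0.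
- rewrite [hadj _]hadjE adjmxD adjmxZ -!hadjE !linearPl /=.
  by rewrite hs_innerDr hs_innerZr hs_innerDl hs_innerZl conjCK IH1 IH2.
- by have [[-> _] _] := drho; apply: Theta_selfadj_density.
Qed.

Section Defect.
Variable mu : C.
Hypothesis mu_real : mu \is Num.real.

Fact defect_key : unit. Proof. by []. Qed.
Definition defect :=
  locked_with defect_key (fun X Y => Theta X Y - mu *: (X *m Y) - (1 - mu) *: (Y *m X)).

Lemma defectE X Y : defect X Y = Theta X Y - mu *: (X *m Y) - (1 - mu) *: (Y *m X).
Proof. by rewrite [defect]unlock. Qed.

Lemma defect_bilinear : bilinear_for *:%R *:%R defect.
Proof.
split=> [M a X Y | R a X Y]; rewrite !defectE ?linearPl ?linearPr /= ?mulmxDl ?mulmxDr.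
all: rewrite -?scalemxAl -?scalemxAr; apply/matrixP => i j; rewrite !mxE; ring.
Qed.

HB.instance Definition _ :=
  bilinear_isBilinear.Build C _ _ _ *:%R *:%R defect defect_bilinear.

Lemma defect_psd_comm R M :
  psd_op R -> 0 < \tr R -> R *m M = M *m R -> defect R M = 0.
Proof.
move=> psdR trR RM; rewrite defectE Theta_psd_comm // RM.
by rewrite -{1}[M *m R]scale1r -!scalerBl subrr scale0r.
Qed.

Lemma defect_antisym X Y : defect X Y = - defect Y X.
Proof.
have dens rho sigma : density rho -> density sigma -> defect rho sigma = - defect sigma rho.
  move=> [psd_r tr_r] [psd_s tr_s]; apply/eqP; rewrite -addr_eq0.
  have diag0 R : psd_op R -> 0 < \tr R -> defect R R = 0.
    by move=> psdR trR; apply: defect_psd_comm.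
  have := diag0 _ (psdD psd_r psd_s); rewrite mxtraceD tr_r tr_s => /(_ (addr_gt0 ltr01 ltr01)).
  by rewrite linearDl !linearDr /= !diag0 ?tr_r ?tr_s // add0r addr0 => ->.
elim/density_span_ind: X Y => [|a X1 X2 IH1 IH2 | rho drho] Y.
- by rewrite linear0l linear0r oppr0.
- by rewrite linearPl linearPr /= IH1 IH2 scalerN [RHS]opprD.
elim/density_span_ind: Y => [|a Y1 Y2 IH1 IH2 | sigma dsigma].
- by rewrite linear0l linear0r oppr0.
- by rewrite linearPl linearPr /= IH1 IH2 scalerN [RHS]opprD.
- exact: dens.
Qed.

Lemma defectxx X : defect X X = 0.
Proof.
have /eqP : defect X X *+ 2 = 0 by rewrite mulr2n {1}defect_antisym addNr.
by rewrite -scaler_nat scaler_eq0 pnatr_eq0 => /eqP.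
Qed.

Lemma defect_adj X Y Z : hs_inner Z (defect X Y) = hs_inner (defect (hadj X) Z) Y.
Proof.
have conj_mu : (1 - mu)^* = 1 - mu by apply: conj_Creal; rewrite rpredB ?rpred1.
have conj_mu1 : mu^* = mu := conj_Creal mu_real.
have mulE A B : hs_inner Z (A *m B) = hs_inner (hadj A *m Z) B.
  by rewrite /hs_inner !hadjE adjmxM adjmxK mulmxA.
have mulE' A B : hs_inner Z (B *m A) = hs_inner (Z *m hadj A) B.
  by rewrite /hs_inner !hadjE adjmxM adjmxK mulmxA mxtrace_mulC mulmxA.
rewrite !defectE !(hs_innerDr, hs_innerDl, hs_innerNr, hs_innerNl, hs_innerZr, hs_innerZl).
by rewrite Theta_adj mulE mulE' conj_mu conj_mu1.
Qed.

(* Self-adjointness makes [dform] totally antisymmetric, not just antisymmetric in X, Y. *)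
Definition dform W X Y := \tr (W *m defect X Y).

Lemma defect_dformE X Y (i j : 'I_n) : defect X Y i j = dform (delta_mx j i) X Y.
Proof. by rewrite /dform mxtrace_delta_mul. Qed.

Lemma dform_defect0 W X Y : defect X Y = 0 -> dform W X Y = 0.
Proof. by rewrite /dform => ->; rewrite mulmx0 mxtrace0. Qed.

Lemma dformC W X Y : dform W X Y = - dform W Y X.
Proof. by rewrite /dform defect_antisym mulmxN linearN. Qed.

Lemma dformxx W X : dform W X X = 0.
Proof. exact/dform_defect0/defectxx. Qed.

Lemma dform_adj W X Y : dform W X Y = (dform (hadj Y) (hadj X) (hadj W))^*.
Proof.
have hsE A B : \tr (hadj A *m B) = hs_inner A B by [].
by rewrite {2}/dform hsE defect_adj hadjK -hs_innerC /hs_inner hadjK.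
Qed.

Lemma dform_swap W X Y : dform W X Y = - dform X W Y.
Proof. by rewrite dform_adj [in RHS]dform_adj dformC rmorphN. Qed.

Lemma dform_cycle W X Y : dform W X Y = dform X Y W.
Proof. by rewrite dform_swap dformC opprK. Qed.

Lemma defect_adj_eq0 X Y : defect X Y = 0 -> defect (hadj Y) (hadj X) = 0.
Proof.
move=> XY0; apply/matrixP => i j.
by rewrite defect_dformE dform_adj !hadjK -dform_cycle dform_defect0 // conjC0 mxE.
Qed.

Lemma defect_dyad_orth (w x y : 'cV[C]_n) :
  adjmx w *m x = 0 -> adjmx y *m w = 0 -> defect (dyad w) (x *m adjmx y) = 0.
Proof.
move=> wx yw; have [->|w0] := eqVneq w 0; first by rewrite /dyad mul0mx linear0l.
apply: defect_psd_comm; [exact: psd_dyad | exact: mxtrace_dyad_gt0 |].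
by rewrite /dyad !mulmxA -(mulmxA w) wx mulmx0 mul0mx -(mulmxA x) yw mulmx0 mul0mx.
Qed.

Lemma defect_orth (u v x y : 'cV[C]_n) :
  adjmx u *m x = 0 -> adjmx v *m x = 0 -> adjmx y *m u = 0 -> adjmx y *m v = 0 ->
  defect (u *m adjmx v) (x *m adjmx y) = 0.
Proof.
move=> ux vx yu yv.
suff [] : defect (u *m adjmx v) (x *m adjmx y) = 0 /\
          defect (v *m adjmx u) (x *m adjmx y) = 0 by [].
apply: conjC_linear_eq0 => s.
have w_x : adjmx (u + s *: v) *m x = 0.
  by rewrite adjmxD adjmxZ mulmxDl -scalemxAl ux vx scaler0 addr0.
have y_w : adjmx y *m (u + s *: v) = 0.
  by rewrite mulmxDr -scalemxAr yu yv scaler0 addr0.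
have := defect_dyad_orth w_x y_w.
rewrite dyadDZ !linearDl !linearZl /= (defect_dyad_orth ux yu) (defect_dyad_orth vx yv).
by rewrite scaler0 add0r addr0.
Qed.

Lemma defect_disjoint a b c d :
  c != a -> c != b -> d != a -> d != b -> defect (E a b) (E c d) = 0.
Proof.
move=> ca cb da db; rewrite -!mul_ev_adjmx.
by apply: defect_orth; apply: adjmx_ev_mul0; rewrite // eq_sym.
Qed.

Lemma defect_path_fork a b c : a != b -> a != c -> b != c ->
  defect (E a a) (E a c) = defect (E a b) (E b c) /\ defect (E a b) (E a c) = 0.
Proof.
(* e_a + s e_b is orthogonal to s^* e_a - e_b and to e_c; read off two coefficients in s. *)
move=> ab ac bc; have ba : b != a by rewrite eq_sym.
have vanish s : defect (dyad (ev a + s *: ev b)) ((s^* *: ev a - ev b) *m adjmx (ev c)) = 0.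
  apply: defect_dyad_orth; last first.
    by rewrite mulmxDr -scalemxAr !adjmx_ev_mul0 1?eq_sym // scaler0 addr0.
  rewrite adjmxD adjmxZ mulmxDl !mulmxBr -!scalemxAl -!scalemxAr !adjmx_ev_mul.
  rewrite !eqxx (negbTE ab) (negbTE ba).
  by apply/matrixP => i j; rewrite !mxE; ring.
have := conjC_quadratic_eq0 (a := defect (E a a) (E a c) - defect (E a b) (E b c))
  (b := defect (E a b) (E a c)) (c := defect (E b a) (E a c) - defect (E b b) (E b c))
  (d := - defect (E b a) (E b c)).
case=> [s | /subr0_eq e1 e2 _ _] //.
have := vanish s; rewrite dyadDZ !mul_ev_adjmx mulmxBl -scalemxAl !mul_ev_adjmx.
rewrite !dyad_ev !linearDl !linearZl !linearBr !linearZr /=.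
have aabc : defect (E a a) (E b c) = 0 by apply: defect_disjoint; rewrite // eq_sym.
have bbac : defect (E b b) (E a c) = 0 by apply: defect_disjoint; rewrite // eq_sym.
rewrite aabc bbac => e; rewrite -[RHS]e; apply/matrixP => i j; rewrite !mxE; ring.
Qed.

(* The value of [dform] on the cycle (E d a, E a a, E a d); it does not depend on a and d
   by [kappa_sym] and [kappa_cycle], and every other value on matrix units is forced to 0. *)
Definition kappa a d := defect (E a a) (E a d) a d.

Lemma kappa_sym a b : a != b -> kappa a b = kappa b a.
Proof.
move=> ab; have ba : b != a by rewrite eq_sym.
have psdR : psd_op (E a a + E b b) by rewrite -!dyad_ev; apply: psdD; apply: psd_dyad.
have trR : 0 < \tr (E a a + E b b).
  by rewrite mxtraceD !mxtrace_delta !eqxx addr_gt0 ?ltr01.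
have := defect_psd_comm (M := E b a) psdR trR.
rewrite mulmxDl mulmxDr !mul_delta_mx !mul_delta_mx_0 // add0r addr0 => /(_ erefl).
rewrite linearDl => /matrixP/(_ b a); rewrite !mxE !defect_dformE.
have kab : kappa a b = - dform (E a b) (E a a) (E b a).
  by rewrite /kappa defect_dformE 2!dform_cycle dformC.
have kba : kappa b a = dform (E a b) (E b b) (E b a) by rewrite /kappa defect_dformE.
by move=> e; rewrite kab kba; apply/eqP; rewrite eq_sym -addr_eq0 addrC e.
Qed.

Lemma kappa_cycle a b c : a != b -> a != c -> b != c -> kappa a c = kappa b a.
Proof.
move=> ab ac bc; have ba : b != a by rewrite eq_sym.
have ca : c != a by rewrite eq_sym.
have [path_abc _] := defect_path_fork ab ac bc.
have [path_bca _] := defect_path_fork bc ba ca.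
by rewrite /kappa path_abc path_bca !defect_dformE dform_cycle.
Qed.

Section Normalized.
Variables i0 i1 : 'I_n.
Hypotheses (i01 : i0 != i1) (kappa01 : kappa i0 i1 = 0).

Lemma kappa_eq0 a d : a != d -> kappa a d = 0.
Proof.
have i10 : i1 != i0 by rewrite eq_sym.
have kappa0x x : x != i0 -> kappa i0 x = 0.
  move=> x0; have [->|x1] := eqVneq x i1; first exact: kappa01.
  by rewrite (kappa_cycle i01) ?(kappa_sym i10) // eq_sym.
have [->|a0] := eqVneq a i0; first by move=> i0d; apply: kappa0x; rewrite eq_sym.
have [->|d0] := eqVneq d i0; first by move=> ai0; rewrite kappa_sym // kappa0x.
by move=> ad; rewrite (kappa_cycle a0 ad) ?kappa0x // eq_sym.
Qed.

Lemma defect_diag_row a d : a != d -> defect (E a a) (E a d) = 0.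
Proof.
move=> ad; apply/matrixP => q p; rewrite mxE defect_dformE.
have [->|pa] := eqVneq p a.
  rewrite dform_cycle; have [->|qa] := eqVneq q a; first by rewrite dform_cycle dformxx.
  have [->|qd] := eqVneq q d; first exact: dformxx.
  have aq : a != q by rewrite eq_sym.
  have dq : d != q by rewrite eq_sym.
  by have [_ fork_adq] := defect_path_fork ad aq dq; rewrite dform_defect0.
have [->|qa] := eqVneq q a; last first.
  by rewrite 2!dform_cycle dform_defect0 // defect_disjoint // eq_sym.
have [->|pd] := eqVneq p d; first by have := kappa_eq0 ad; rewrite /kappa defect_dformE.
have ap : a != p by rewrite eq_sym.
have [path_apd _] := defect_path_fork ap ad pd.
have [_ fork_pad] := defect_path_fork pa pd ad.
by rewrite /dform path_apd -/(dform _ _ _) dform_cycle dformC dform_defect0 ?oppr0.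
Qed.

Lemma defect_diagl a c d : defect (E a a) (E c d) = 0.
Proof.
have [->|ca] := eqVneq c a.
  by have [->|da] := eqVneq d a; [exact: defectxx | apply: defect_diag_row; rewrite eq_sym].
have [->|da] := eqVneq d a; last exact: defect_disjoint.
have := @defect_adj_eq0 (E a c) (E a a); rewrite !hadjE !adjmx_delta; apply.
by rewrite defect_antisym defect_diag_row ?oppr0 // eq_sym.
Qed.

Lemma defect_offdiag a b c d : a != b -> c != d -> (c != b) || (d != a) ->
  defect (E a b) (E c d) = 0.
Proof.
move=> ab; have ba : b != a by rewrite eq_sym.
have [->|ca] := eqVneq c a.
  move=> ad _; have [->|db] := eqVneq d b; first exact: defectxx.
  have bd : b != d by rewrite eq_sym.
  by have [_ ->] := defect_path_fork ab ad bd.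
have [->|cb] := eqVneq c b.
  move=> bd /= da; have ad : a != d by rewrite eq_sym.
  by have [<- _] := defect_path_fork ab ad bd; rewrite defect_diagl.
move=> cd _; have [->|da] := eqVneq d a.
  have [path_cab _] := defect_path_fork ca cb ab.
  by rewrite defect_antisym -path_cab defect_diagl oppr0.
have [->|db] := eqVneq d b; last exact: defect_disjoint.
have := @defect_adj_eq0 (E b c) (E b a); rewrite !hadjE !adjmx_delta; apply.
have bc : b != c by rewrite eq_sym.
by have [_ ->] := defect_path_fork bc ba ca.
Qed.

Lemma defect_swap a b : defect (E a b) (E b a) = 0.
Proof.
have [->|ab] := eqVneq a b; first exact: defectxx.
apply/matrixP => q p; rewrite mxE defect_dformE.
have [[-> ->]|not_ab] := eqVneq (p, q) (a, b); first by rewrite 2!dform_cycle dformxx.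
rewrite dform_cycle dform_defect0 //.
have [->|pq] := eqVneq p q; first by rewrite defect_antisym defect_diagl oppr0.
apply: defect_offdiag => //; first by rewrite eq_sym.
by apply: contraNT not_ab; rewrite negb_or !negbK => /andP[/eqP-> /eqP->].
Qed.

Lemma defect_delta a b c d : defect (E a b) (E c d) = 0.
Proof.
have [->|ab] := eqVneq a b; first exact: defect_diagl.
have [->|cd] := eqVneq c d; first by rewrite defect_antisym defect_diagl oppr0.
have [[-> ->]|not_swap] := eqVneq (c, d) (b, a); first exact: defect_swap.
apply: defect_offdiag => //.
by apply: contraNT not_swap; rewrite negb_or !negbK => /andP[/eqP-> /eqP->].
Qed.

End Normalized.

Lemma defect_eq0 : (forall a b c d, defect (E a b) (E c d) = 0) -> forall X Y, defect X Y = 0.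
Proof.
move=> D0 X Y; rewrite [X]matrix_sum_delta [Y]matrix_sum_delta.
rewrite linear_sumlz big1 // => i _; rewrite linear_sumlz big1 // => j _.
rewrite linear_sumr big1 // => k _; rewrite linear_sumr big1 // => l _.
by rewrite linearZl linearZr /= D0 !scaler0.
Qed.

Lemma defect_le1 : (n <= 1)%N -> forall X Y, defect X Y = 0.
Proof.
move=> n_le1; apply: defect_eq0 => a b c d.
have ord0 (i : 'I_n) : val i = 0%N.
  by apply/eqP; rewrite -leqn0 -ltnS (leq_trans (ltn_ord i) n_le1).
have ord_eq (i j : 'I_n) : i = j by apply: val_inj; rewrite !ord0.
by rewrite (ord_eq b a) (ord_eq c a) (ord_eq d a) defectxx.
Qed.

Lemma defect0_ThetaE : (forall X Y, defect X Y = 0) ->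
  forall X Y, Theta X Y = mu *: (X *m Y) + (1 - mu) *: (Y *m X).
Proof. by move=> D0 X Y; apply/eqP; rewrite -subr_eq0 opprD addrA -defectE D0. Qed.

Lemma defect0_psd_bounds (i0 i1 : 'I_n) : i0 != i1 -> (forall X Y, defect X Y = 0) ->
  (forall rho, density rho -> forall M, 0 <= hs_inner M (Theta rho M)) -> 0 <= mu <= 1.
Proof.
move=> i01 D0 Theta_psd; have i10 : i1 != i0 by rewrite eq_sym.
have := Theta_psd _ (density_delta C i0) (E i0 i1).
have := Theta_psd _ (density_delta C i0) (E i1 i0).
rewrite !hs_inner_delta !(defect0_ThetaE D0) !mul_delta_mx !mul_delta_mx_0 //.
by rewrite !scaler0 add0r addr0 !mxE !eqxx !mulr1 subr_ge0 => -> ->.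
Qed.

End Defect.

Definition jordan_coef (i0 i1 : 'I_n) := Theta (E i0 i0) (E i0 i1) i0 i1.

Lemma jordan_coef_real (i0 i1 : 'I_n) : jordan_coef i0 i1 \is Num.real.
Proof.
apply/CrealP; have := Theta_selfadj_density (density_delta C i0) (E i0 i1) (E i0 i1).
by rewrite /jordan_coef hs_inner_delta hs_innerC hs_inner_delta => e; rewrite -e.
Qed.

Lemma defect_jordan_coef (i0 i1 : 'I_n) : i0 != i1 ->
  forall X Y, defect (jordan_coef i0 i1) X Y = 0.
Proof.
move=> i01; apply/defect_eq0/(defect_delta (jordan_coef_real i0 i1) i01).
rewrite /kappa defectE mul_delta_mx mul_delta_mx_0 1?eq_sym // scaler0 subr0.
by rewrite !mxE !eqxx mulr1 subrr.
Qed.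
End Extension.

Theorem proposition6 (C : numClosedFieldType) (n : nat)
  (Theta : 'M[C]_n -> 'M[C]_n -> 'M[C]_n)
  (* rho |-> Theta_rho is (the restriction of) a linear map B(A) -> L(B(A)) *)
  (Hlin_rho : forall (a : C) (r1 r2 M : 'M[C]_n),
      Theta (a *: r1 + r2) M = a *: Theta r1 M + Theta r2 M)
  (* each Theta_rho is a linear map B(A) -> B(A) *)
  (Hlin_M : forall rho : 'M[C]_n, density rho ->
      forall (a : C) (M1 M2 : 'M[C]_n),
        Theta rho (a *: M1 + M2) = a *: Theta rho M1 + Theta rho M2)
  (* Theta_rho(M) = rho M whenever [rho, M] = 0 *)
  (Hcomm : forall rho : 'M[C]_n, density rho ->
      forall M : 'M[C]_n, rho *m M - M *m rho = 0 -> Theta rho M = rho *m M)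
  (* Theta_rho is self-adjoint w.r.t. the Hilbert-Schmidt inner product *)
  (Hsa : forall rho : 'M[C]_n, density rho ->
      forall X Y : 'M[C]_n, hs_inner X (Theta rho Y) = hs_inner (Theta rho X) Y) :
  exists mu : C, mu \is Num.real /\
    (forall rho : 'M[C]_n, density rho ->
       forall M : 'M[C]_n, Theta rho M = mu *: (rho *m M) + (1 - mu) *: (M *m rho)) /\
    ((forall rho : 'M[C]_n, density rho ->
        forall M : 'M[C]_n, 0 <= hs_inner M (Theta rho M)) ->
     0 <= mu <= 1).
Proof.
have Hlin_l M : linear (Theta ^~ M) by move=> a X Y; apply: Hlin_rho.
have [n_le1 | n_gt1] := leqP n 1.
  exists 0; split; [exact: rpred0 | split; last by rewrite lexx ler01].
  by move=> rho _ M; apply/defect0_ThetaE/(defect_le1 Hlin_l Hlin_M).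
pose i0 : 'I_n := Ordinal (ltnW n_gt1); pose i1 : 'I_n := Ordinal n_gt1.
have i01 : i0 != i1 by [].
have D0 := defect_jordan_coef Hlin_l Hlin_M Hcomm Hsa i01.
exists (jordan_coef Theta i0 i1); split; first exact: jordan_coef_real.
split=> [rho _ M | ]; first exact: defect0_ThetaE.
exact: defect0_psd_bounds i01 D0.
Qed.
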